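(* Let $(\mathfrak{A},\mathfrak{A}_0)$ be a CQ*-algebra as in the context, let $H=H^*\in\mathfrak{A}_0$, $\omega\in E(\mathfrak{A}_0)$ and $\alpha\in\mathbb{C}$. Consider the statements: (i) $\overline{\omega}$ is an eigenstate of $H$ with eigenvalue $\alpha$; (ii) $\omega$ is an eigenstate of $H$ with eigenvalue $\alpha$; (iii) for every $t\in\mathbb{R}$, $\overline{\omega}$ is an eigenstate of $e^{itH}$ with eigenvalue $e^{it\alpha}$; (iv) for every $t\in\mathbb{R}$, $\omega$ is an eigenstate of $e^{itH}$ with eigenvalue $e^{it\alpha}$. Then (i)$\Leftrightarrow$(ii), (iii)$\Leftrightarrow$(iv), and (ii)$\Rightarrow$(iv).
   Context: Let $\mathfrak{A}_0$ be a unital C*-algebra with C*-norm $\|\cdot\|_0$ and unit $I$, and $\|\cdot\|$ another norm on $\mathfrak{A}_0$ with $\|A\|\le\|A\|_0$, $\|AB\|\le\|A\|\,\|B\|_0$, $\|A^*\|=\|A\|$. $\mathfrak{A}$ is the $\|\cdot\|$-completion of $\mathfrak{A}_0$, with $XA:=\lim A_nA$, $AX:=\lim AA_n$ for $X\in\mathfrak{A}$, $A\in\mathfrak{A}_0$, $A_n\in\mathfrak{A}_0$, $\|A_n-X\|\to0$. $E(\mathfrak{A}_0)$ is the set of positive linear functionals $\omega$ on $\mathfrak{A}_0$ with $\omega(I)=1$ and $|\omega(A)|\le\gamma\|A\|$ for some $\gamma>0$; $\overline{\omega}$ is its $\|\cdot\|$-continuous extension to $\mathfrak{A}$. For $Y\in\mathfrak{A}$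 and $\beta\in\mathbb{C}$, $\overline{\omega}$ is an eigenstate of $Y$ with eigenvalue $\beta$ if $\overline{\omega}(AY)=\beta\,\overline{\omega}(A)$ for all $A\in\mathfrak{A}_0$; for $Y\in\mathfrak{A}_0$, $\omega$ is an eigenstate of $Y$ with eigenvalue $\beta$ if $\omega(AY)=\beta\,\omega(A)$ for all $A\in\mathfrak{A}_0$. $e^{itH}\in\mathfrak{A}_0$ is defined by functional calculus. *)

From HB Require Import structures.
From mathcomp Require Import all_boot all_algebra.
From mathcomp Require Import complex.
From mathcomp Require Import reals.
From mathcomp.analysis Require Import sequences exp trigo.
From Stdlib Require Import ClassicalEpsilon.
Import GRing.Theory Num.Theory.

Set Implicit Arguments.
Unset Strict Implicit.
Unset Printing Implicit Defensive.

Local Open Scope ring_scope.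
Local Open Scope complex_scope.

Section Defs.
Variable R : realType.
Local Notation C := R[i].

Definition cabs (c : C) : R := ComplexField.Normc.normc c.

Section Norms.
Variable V : lmodType C.

Definition is_norm (N : V -> R) : Prop :=
  [/\ forall x, 0 <= N x,
      forall x, N x = 0 -> x = 0,
      forall (c : C) x, N (c *: x) = cabs c * N x &
      forall x y, N (x + y) <= N x + N y].

Definition cvg_in (N : V -> R) (u : nat -> V) (l : V) : Prop :=
  forall e : R, 0 < e -> exists K : nat, forall k, (K <= k)%N -> N (u k - l) < e.

Definition cauchy_in (N : V -> R) (u : nat -> V) : Prop :=
  forall e : R, 0 < e -> exists K : nat,
    forall k m, (K <= k)%N -> (K <= m)%N -> N (u k - u m) < e.

Definition complete_in (N : V -> R) : Prop :=
  forall u, cauchy_in N u -> exists l, cvg_in N u l.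

Definition linear_fun (W : lmodType C) (f : V -> W) : Prop :=
  forall (c : C) x y, f (c *: x + y) = c *: f x + f y.
End Norms.

Definition is_Cstar_algebra (A0 : algType C) (star : A0 -> A0) (n0 : A0 -> R)
  : Prop :=
  [/\ forall a b, star (a + b) = star a + star b,
      forall (c : C) a, star (c *: a) = (c^*)%C *: star a,
      forall a b, star (a * b) = star b * star a &
      forall a, star (star a) = a] /\
  [/\ is_norm n0,
      forall a b, n0 (a * b) <= n0 a * n0 b,
      forall a, n0 (star a * a) = n0 a ^+ 2 &
      complete_in n0].

(* The CQ*-algebra (A, A0): a second norm n on A0 with the compatibility *)
(* conditions of the paper, and A = X the n-completion of A0, given by a *)
(* complete normed space X with an isometric linear map j : A0 -> X with *)
(* dense range.                                                          *)
Definition is_CQstar_algebra (A0 : algType C) (star : A0 -> A0) (n0 n : A0 -> R)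
  (X : lmodType C) (nX : X -> R) (j : A0 -> X) : Prop :=
  [/\ is_Cstar_algebra star n0,
      is_norm n,
      forall a, n a <= n0 a,
      forall a b, n (a * b) <= n a * n0 b &
      forall a, n (star a) = n a] /\
  [/\ is_norm nX, complete_in nX,
      linear_fun j, (forall a, nX (j a) = n a) &
      forall x : X, exists u : nat -> A0, cvg_in nX (j \o u) x].

(* AX := lim A A_n  (A in A0, X in the completion, j A_n -> X)          *)
Definition leftmul (A0 : algType C) (X : lmodType C) (nX : X -> R)
  (j : A0 -> X) (a : A0) (x : X) : X :=
  epsilon (inhabits 0) (fun z : X => exists u : nat -> A0,
     cvg_in nX (j \o u) x /\ cvg_in nX (fun k => j (a * u k)) z).

Definition in_E (A0 : algType C) (star : A0 -> A0) (n : A0 -> R) (w : A0 -> C)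
  : Prop :=
  [/\ linear_fun (w : A0 -> C^o),
      forall a, 0 <= w (star a * a),
      w 1 = 1 &
      exists gamma : R, 0 < gamma /\ forall a, cabs (w a) <= gamma * n a].

Definition omega_bar (A0 : algType C) (X : lmodType C) (nX : X -> R)
  (j : A0 -> X) (w : A0 -> C) : X -> C :=
  epsilon (inhabits (fun _ => 0)) (fun f : X -> C =>
     [/\ linear_fun (f : X -> C^o),
         (exists gamma : R, forall x, cabs (f x) <= gamma * nX x) &
         forall a, f (j a) = w a]).

Definition eigenstate_bar (A0 : algType C) (X : lmodType C) (nX : X -> R)
  (j : A0 -> X) (w : A0 -> C) (Y : X) (beta : C) : Prop :=
  forall a : A0, omega_bar nX j w (leftmul nX j a Y) = beta * omega_bar nX j w (j a).

Definition eigenstate (A0 : algType C) (w : A0 -> C) (Y : A0) (beta : C) : Prop :=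
  forall a : A0, w (a * Y) = beta * w a.

Definition expC (z : C) : C :=
  (expR (complex.Re z))%:C * ((cos (complex.Im z))%:C + 'i * (sin (complex.Im z))%:C).

(* e^{itH} in A0: for H = H^*, the continuous functional calculus of
   x |-> e^{itx} at H coincides with the n0-norm-convergent exponential
   series sum_m (it)^m/m! H^m; we define e^{itH} as the limit of it. *)
Definition expA (A0 : algType C) (n0 : A0 -> R) (H : A0) (t : R) : A0 :=
  epsilon (inhabits 0) (fun U : A0 =>
     cvg_in n0 (fun k => \sum_(m < k) (('i * t%:C) ^+ m / (m`!)%:R) *: H ^+ m) U).

End Defs.

(* The extension [omega_bar] of [w] to the completion exists because [w] is
   [n]-bounded and the complex numbers are complete, and it agrees with [w] on
   [j A0]. Likewise left multiplication by [a] on the completion agrees with the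
   product of [A0] on [j A0], because [b |-> a b] is [n]-bounded:
   [n (a b) = n (b^* a^* ) <= n0 (a^* ) n b]. So the eigenstate equation of
   [omega_bar] at [j Y] is that of [w] at [Y], which gives (i) <-> (ii) and
   (iii) <-> (iv).
   For (ii) -> (iv): positivity of [w] makes [w H], hence [alpha = w H], real.
   The eigen-equation passes to the partial sums of the exponential series of
   [itH], with eigenvalue the partial sums of that of [it alpha], and then to
   the limit, since [x |-> w (a x)] is [n0]-bounded; the scalar series sums to
   [cos (t alpha) + i sin (t alpha)]. *)

From HB Require Import structures.
From mathcomp Require Import all_boot all_algebra.
From mathcomp Require Import complex.
From mathcomp Require Import reals.
From mathcomp Require Import boolp classical_sets topology normedtype.
From mathcomp.analysis Require Import sequences exp trigo.
From mathcomp Require Import ring.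
From Stdlib Require Import ClassicalEpsilon.
Import order.Order.TTheory GRing.Theory Num.Theory numFieldNormedType.Exports.

Set Implicit Arguments.
Unset Strict Implicit.
Unset Printing Implicit Defensive.

Local Open Scope ring_scope.
Local Open Scope complex_scope.
Local Open Scope classical_set_scope.

Section LinearFun.
Variables (R : realType) (V W : lmodType R[i]) (f : V -> W).
Hypothesis hf : linear_fun f.

Lemma linear_funD x y : f (x + y) = f x + f y.
Proof. by have := hf 1 x y; rewrite !scale1r. Qed.

Lemma linear_fun0 : f 0 = 0.
Proof. by apply: (addrI (f 0)); rewrite -linear_funD !addr0. Qed.

Lemma linear_funZ c x : f (c *: x) = c *: f x.
Proof. by have := hf c x 0; rewrite linear_fun0 !addr0. Qed.

Lemma linear_funB x y : f (x - y) = f x - f y.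
Proof. by rewrite [x - y]addrC -scaleN1r hf scaleN1r addrC. Qed.

Lemma linear_fun_sum (I : Type) (r : seq I) (P : pred I) (F : I -> V) :
  f (\sum_(i <- r | P i) F i) = \sum_(i <- r | P i) f (F i).
Proof. exact: (big_morph f linear_funD linear_fun0). Qed.

End LinearFun.

Lemma le_vanishing (R : realType) (a b : R) (r : nat -> R) :
  (forall k, a <= b + r k) -> r @ \oo --> 0 -> a <= b.
Proof.
move=> abr r0; rewrite -[b]addr0.
by apply: ler_cvg_to (cvg_cst a) (cvgD (cvg_cst b) r0) _; near=> k; exact: abr.
Unshelve. all: by end_near.
Qed.

Section NormedModule.
Variables (R : realType) (V : lmodType R[i]) (N : V -> R).
Hypothesis hN : is_norm N.

Lemma isnorm_ge0 x : 0 <= N x.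
Proof. by case: hN. Qed.

Lemma isnorm_eq0 x : N x = 0 -> x = 0.
Proof. by case: hN => _ + _ _; apply. Qed.

Lemma isnormZ c x : N (c *: x) = cabs c * N x.
Proof. by case: hN. Qed.

Lemma isnormD x y : N (x + y) <= N x + N y.
Proof. by case: hN. Qed.

Lemma isnorm0 : N 0 = 0.
Proof. by rewrite -(scale0r 0) isnormZ /cabs /= expr0n /= addr0 sqrtr0 mul0r. Qed.

Lemma isnormN x : N (- x) = N x.
Proof.
rewrite -scaleN1r isnormZ /cabs /= oppr0 expr0n /= addr0 sqrtr_sqr normrN.
by rewrite normr1 mul1r.
Qed.

Lemma isnorm_distC x y : N (x - y) = N (y - x).
Proof. by rewrite -isnormN opprB. Qed.

Lemma isnorm_distD x y z : N (x - z) <= N (x - y) + N (y - z).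
Proof. by rewrite -[x - z](subrKA y) isnormD. Qed.

Lemma isnorm_sum (I : Type) (r : seq I) (P : pred I) (F : I -> V) :
  N (\sum_(i <- r | P i) F i) <= \sum_(i <- r | P i) N (F i).
Proof.
elim/big_ind2: _ => [|x a y b hxa hyb|//]; first by rewrite isnorm0.
by rewrite (le_trans (isnormD _ _)) ?lerD.
Qed.

Lemma cvg_in_dist0 u l : cvg_in N u l -> (fun k => N (u k - l)) @ \oo --> 0.
Proof.
move=> ul; apply/cvgr0Pnorm_lt => e e0; have [K HK] := ul e e0.
by exists K => // k /HK; rewrite ger0_norm ?isnorm_ge0.
Qed.

Lemma cvg_in_bound u l (r : nat -> R) :
  (forall k, N (u k - l) <= r k) -> r @ \oo --> 0 -> cvg_in N u l.
Proof.
move=> ur /cvgr0Pnorm_lt r0 e /r0[K _ HK]; exists K => k /HK /=.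
by apply: le_lt_trans; rewrite (le_trans (ur k)) ?ler_norm.
Qed.

Lemma cvg_in_cst x : cvg_in N (fun=> x) x.
Proof. by move=> e e0; exists 0%N => k _; rewrite subrr isnorm0. Qed.

Lemma cvg_in_unique u l l' : cvg_in N u l -> cvg_in N u l' -> l = l'.
Proof.
move=> ul ul'; apply/eqP; rewrite -subr_eq0; apply/eqP/isnorm_eq0/eqP.
rewrite eq_le isnorm_ge0 andbT.
apply: (le_vanishing (r := fun k => N (u k - l) + N (u k - l'))).
  by move=> k /=; rewrite add0r (isnorm_distC (u k)) isnorm_distD.
by rewrite -[0]addr0; apply: cvgD; apply: cvg_in_dist0.
Qed.

Lemma cvg_inZ c u l : cvg_in N u l -> cvg_in N (fun k => c *: u k) (c *: l).
Proof.
move=> ul; apply: (cvg_in_bound (r := fun k => cabs c * N (u k - l))).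
  by move=> k; rewrite -scalerBr isnormZ.
by rewrite -(mulr0 (cabs c)); apply: cvgM (cvg_cst _) (cvg_in_dist0 ul).
Qed.

Lemma cvg_inD u v l m :
  cvg_in N u l -> cvg_in N v m -> cvg_in N (fun k => u k + v k) (l + m).
Proof.
move=> ul vm; apply: (cvg_in_bound (r := fun k => N (u k - l) + N (v k - m))).
  by move=> k; rewrite opprD addrACA isnormD.
by rewrite -[0]addr0; apply: cvgD; apply: cvg_in_dist0.
Qed.

Lemma cvg_in_cauchy u l : cvg_in N u l -> cauchy_in N u.
Proof.
move=> ul e e0; have [K HK] := ul _ (divr_gt0 e0 (ltr0Sn _ 1)).
exists K => k m Hk Hm; rewrite (le_lt_trans (isnorm_distD _ l _)) //.
by rewrite (isnorm_distC l) [e]splitr ltrD ?HK.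
Qed.

Lemma cauchy_in_bound (u : nat -> V) (r : nat -> R) :
  (forall m k, (m <= k)%N -> N (u k - u m) <= r m) -> r @ \oo --> 0 ->
  cauchy_in N u.
Proof.
move=> ur /cvgr0Pnorm_lt r0 e e0.
have [K _ HK] := r0 _ (divr_gt0 e0 (ltr0Sn _ 1)).
exists K => k m Hk Hm; rewrite (le_lt_trans (isnorm_distD _ (u K) _)) //.
rewrite (isnorm_distC (u K)) [e]splitr.
have rK : r K < e / 2 := le_lt_trans (ler_norm _) (HK K (leqnn K)).
by rewrite ltrD // (le_lt_trans _ rK) ?ur.
Qed.

End NormedModule.

Section ComplexModulus.
Variable R : realType.
Local Notation C := R[i].

Lemma cabs_real (x : R) : cabs x%:C = `|x|.
Proof. by rewrite /cabs /= expr0n /= addr0 sqrtr_sqr. Qed.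

Lemma cabs_i : cabs 'i = 1 :> R.
Proof. by rewrite /cabs /= expr0n expr1n add0r sqrtr1. Qed.

Lemma cabsM (a b : C) : cabs (a * b) = cabs a * cabs b.
Proof. exact: ComplexField.Normc.normcM. Qed.

Lemma cabsX (a : C) m : cabs (a ^+ m) = cabs a ^+ m.
Proof.
elim: m => [|m IH]; last by rewrite !exprS cabsM IH.
by rewrite !expr0 /cabs /= expr0n expr1n addr0 sqrtr1.
Qed.

Lemma cabsV (a : C) : cabs a^-1 = (cabs a)^-1.
Proof. exact: ComplexField.Normc.normcV. Qed.

Lemma cabs_nat m : cabs m%:R = m%:R :> R.
Proof. by rewrite -(rmorph_nat (real_complex R)) cabs_real normr_nat. Qed.

Lemma cabs_norm : is_norm (V := C^o) (@cabs R).
Proof.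
split=> [c|c /ComplexField.Normc.eq0_normc //|c x|x y]; last exact: le_normcD.
  by case: c => a b; rewrite /cabs sqrtr_ge0.
exact: cabsM.
Qed.

Lemma cabs_le_ReIm (c : C) : cabs c <= `|complex.Re c| + `|complex.Im c|.
Proof.
rewrite [c in cabs c]complexE (le_trans (isnormD cabs_norm _ _)) //.
by rewrite cabsM cabs_i mul1r !cabs_real.
Qed.

Lemma Re_le_cabs (c : C) : `|complex.Re c| <= cabs c.
Proof. by case: c => a b; rewrite /cabs -sqrtr_sqr ler_wsqrtr // lerDl sqr_ge0. Qed.

Lemma Im_le_cabs (c : C) : `|complex.Im c| <= cabs c.
Proof. by case: c => a b; rewrite /cabs -sqrtr_sqr ler_wsqrtr // lerDr sqr_ge0. Qed.

Lemma cauchy_cvgnR (r : nat -> R) :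
  (forall e, 0 < e -> exists K,
     forall k m, (K <= k)%N -> (K <= m)%N -> `|r k - r m| < e) ->
  cvgn r.
Proof.
move=> rC; apply/cauchy_cvgP/cauchy_ballP => e e0; have [K HK] := rC e e0.
near_simpl; exists ([set k | (K <= k)%N], [set k | (K <= k)%N]).
  by split; exists K.
by case=> k m /= [Hk Hm]; rewrite /ball /= distrC HK.
Qed.

Lemma cabs_complete : complete_in (V := C^o) (@cabs R).
Proof.
move=> u uC.
have partC (p : C -> R) : (forall a b, p (a - b) = p a - p b) ->
    (forall c, `|p c| <= cabs c) -> cvgn (p \o u).
  move=> pB p_le; apply: cauchy_cvgnR => e /uC[K HK].
  by exists K => k m Hk Hm; rewrite /= -pB (le_lt_trans (p_le _)) ?HK.
have /cvg_ex[a ReC] : cvgn (@complex.Re R \o u).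
  by apply: partC Re_le_cabs => -[? ?] [? ?].
have /cvg_ex[b ImC] : cvgn (@complex.Im R \o u).
  by apply: partC Im_le_cabs => -[? ?] [? ?].
exists (a +i* b).
apply: (cvg_in_bound (r := fun k => `|complex.Re (u k) - a| + `|complex.Im (u k) - b|)).
  by move=> k; apply: le_trans (cabs_le_ReIm _) _; case: (u k).
by rewrite -[0]addr0; apply: cvgD; apply/norm_cvg0P/subr_cvg0.
Qed.

End ComplexModulus.

Arguments cabs_norm {R}.

Local Notation cvg_inC := (cvg_in (V := (_ [i])^o) (@cabs _)).

Section BoundedExtension.
Variables (R : realType) (V X : lmodType R[i]) (n : V -> R) (nX : X -> R).
Variables (j : V -> X) (w : V -> R[i]) (gamma : R).
Hypotheses (hnX : is_norm nX) (hj : linear_fun j).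
Hypothesis j_isometry : forall a, nX (j a) = n a.
Hypothesis j_dense : forall x, exists u : nat -> V, cvg_in nX (j \o u) x.
Hypotheses (hw : linear_fun (w : V -> R[i]^o)) (gamma_gt0 : 0 < gamma).
Hypothesis w_bounded : forall a, cabs (w a) <= gamma * n a.

Lemma w_dist_le a b : cabs (w a - w b) <= gamma * nX (j a - j b).
Proof. by rewrite -(linear_funB hw) -(linear_funB hj) j_isometry w_bounded. Qed.

Lemma w_cauchy_of_j u x : cvg_in nX (j \o u) x -> cauchy_in (@cabs R) (w \o u).
Proof.
move=> /(cvg_in_cauchy hnX) juC e e0.
have [K HK] := juC _ (divr_gt0 e0 gamma_gt0).
exists K => k m Hk Hm; rewrite (le_lt_trans (w_dist_le _ _)) //.
by rewrite -ltr_pdivlMl // mulrC HK.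
Qed.

Lemma w_cvg_in_of_j u v x L : cvg_in nX (j \o u) x -> cvg_in nX (j \o v) x ->
  cvg_inC (w \o v) L -> cvg_inC (w \o u) L.
Proof.
move=> jux jvx wvL.
apply: (cvg_in_bound (r := fun k =>
  gamma * (nX (j (u k) - x) + nX (j (v k) - x)) + cabs (w (v k) - L))).
  move=> k /=; rewrite (le_trans (isnorm_distD cabs_norm _ (w (v k)) _)) //.
  rewrite lerD2r (le_trans (w_dist_le _ _)) //; apply: ler_wpM2l; first exact: ltW.
  by rewrite (isnorm_distC hnX (j (v k))) isnorm_distD.
rewrite -[0]addr0; apply: cvgD; last exact (cvg_in_dist0 cabs_norm wvL).
rewrite -(mulr0 gamma) -[0]addr0; apply: cvgM (cvg_cst _) _.
by apply: cvgD; apply: cvg_in_dist0 hnX _ _ _.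
Qed.

Definition wext (x : X) : R[i] := epsilon (inhabits 0) (fun L =>
  exists u, cvg_in nX (j \o u) x /\ cvg_inC (w \o u) L).

Lemma wext_cvg_in u x : cvg_in nX (j \o u) x -> cvg_inC (w \o u) (wext x).
Proof.
move=> jux; have [L wuL] := cabs_complete (w_cauchy_of_j jux).
pose P L := exists v, cvg_in nX (j \o v) x /\ cvg_inC (w \o v) L.
have [v [jvx wvL]] : P (wext x) by apply: (epsilon_spec (inhabits 0) P); exists L, u.
exact: w_cvg_in_of_j jux jvx wvL.
Qed.

Lemma wext_j a : wext (j a) = w a.
Proof.
have wext_cvg : cvg_inC (fun=> w a) (wext (j a)).
  exact: (wext_cvg_in (u := fun=> a) (cvg_in_cst hnX (j a))).
exact (cvg_in_unique cabs_norm wext_cvg (cvg_in_cst cabs_norm (w a))).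
Qed.

Lemma wext_linear : linear_fun (wext : X -> R[i]^o).
Proof.
move=> c x y; have [u jux] := j_dense x; have [v jvy] := j_dense y.
have jcuv : cvg_in nX (j \o (fun k => c *: u k + v k)) (c *: x + y).
  rewrite (_ : j \o _ = fun k => c *: (j \o u) k + (j \o v) k).
    exact (cvg_inD hnX (cvg_inZ hnX c jux) jvy).
  by apply: funext => k; rewrite /= hj.
apply: (cvg_in_unique (V := R[i]^o) cabs_norm (wext_cvg_in jcuv)).
rewrite (_ : w \o _ = fun k => c *: (w \o u) k + (w \o v) k).
  exact (cvg_inD cabs_norm (cvg_inZ cabs_norm c (wext_cvg_in jux)) (wext_cvg_in jvy)).
by apply: funext => k; rewrite /= hw.
Qed.

Lemma wext_bounded x : cabs (wext x) <= gamma * nX x.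
Proof.
have [u jux] := j_dense x.
apply: (le_vanishing (r := fun k =>
  cabs (w (u k) - wext x) + gamma * nX (j (u k) - x))).
  move=> k /=; rewrite addrCA -mulrDr (isnorm_distC cabs_norm (w (u k))).
  rewrite -{1}[wext x](subrK (w (u k))) (le_trans (isnormD cabs_norm _ _)) //.
  rewrite lerD2l (le_trans (w_bounded _)) //; apply: ler_wpM2l; first exact: ltW.
  by rewrite -j_isometry addrC -{1}[j (u k)](subrK x) (isnormD hnX).
rewrite -[0]addr0 -[t in _ + t](mulr0 gamma); apply: cvgD.
  exact (cvg_in_dist0 cabs_norm (wext_cvg_in jux)).
exact: cvgM (cvg_cst _) (cvg_in_dist0 hnX jux).
Qed.

Lemma bounded_extension : exists f : X -> R[i],
  [/\ linear_fun (f : X -> R[i]^o), (exists g, forall x, cabs (f x) <= g * nX x) &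
      forall a, f (j a) = w a].
Proof.
exists wext; split; [exact: wext_linear | exists gamma | exact: wext_j].
exact: wext_bounded.
Qed.

End BoundedExtension.

Section LeftMultiplication.
Variables (R : realType) (A0 : algType R[i]) (X : lmodType R[i]).
Variables (n : A0 -> R) (nX : X -> R) (j : A0 -> X).
Hypotheses (hnX : is_norm nX) (hj : linear_fun j).
Hypothesis j_isometry : forall a, nX (j a) = n a.

Lemma leftmul_j a c Y : (forall b, n (a * b) <= c * n b) ->
  leftmul nX j a (j Y) = j (a * Y).
Proof.
move=> a_bounded.
pose P z := exists u, cvg_in nX (j \o u) (j Y) /\ cvg_in nX (fun k => j (a * u k)) z.
have [u [juY jauz]] : P (leftmul nX j a (j Y)).
  apply: (epsilon_spec (inhabits 0) P); exists (j (a * Y)), (fun=> Y).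
  by split; exact: (cvg_in_cst hnX).
apply: (cvg_in_unique hnX jauz).
apply: (cvg_in_bound (r := fun k => c * nX (j (u k) - j Y))).
  by move=> k; rewrite -!(linear_funB hj) !j_isometry -mulrBr a_bounded.
by rewrite -(mulr0 c); apply: cvgM (cvg_cst _) (cvg_in_dist0 hnX juY).
Qed.

End LeftMultiplication.

Section ExponentialSeries.
Variables (R : realType) (A0 : algType R[i]) (n0 : A0 -> R).
Hypotheses (hn0 : is_norm n0) (n0M : forall a b, n0 (a * b) <= n0 a * n0 b).
Hypothesis n0_complete : complete_in n0.

Definition exp_term (z : R[i]) (x : A0) (m : nat) : A0 :=
  (z ^+ m / m`!%:R) *: x ^+ m.

(* No normalisation [n0 1 = 1] is assumed, hence the factor [n0 1]. *)
Lemma n0_exprn_le x m : n0 (x ^+ m) <= n0 1 * n0 x ^+ m.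
Proof.
elim: m => [|m IH]; first by rewrite expr0 mulr1.
rewrite exprSr (le_trans (n0M _ _)) // exprSr mulrA.
by apply: ler_wpM2r IH; apply: isnorm_ge0.
Qed.

Lemma exp_term_le z x m :
  n0 (exp_term z x m) <= n0 1 * exp_coeff (cabs z * n0 x) m.
Proof.
rewrite (isnormZ hn0) cabsM cabsX cabsV cabs_nat.
have -> : n0 1 * exp_coeff (cabs z * n0 x) m =
    cabs z ^+ m / m`!%:R * (n0 1 * n0 x ^+ m).
  by rewrite /exp_coeff /= exprMn; ring.
apply: ler_wpM2l (n0_exprn_le x m).
by rewrite mulr_ge0 ?invr_ge0 ?exprn_ge0 ?(isnorm_ge0 cabs_norm).
Qed.

Lemma exp_series_cauchy z x : cauchy_in n0 (series (exp_term z x)).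
Proof.
pose T := series (exp_coeff (cabs z * n0 x)).
have T_cvg : cvgn T := is_cvg_series_exp_coeff _.
have T_incr : nondecreasing_seq T.
  apply: nondecreasing_series => m _ _.
  by rewrite exp_coeff_ge0 // mulr_ge0 ?(isnorm_ge0 cabs_norm) ?(isnorm_ge0 hn0).
apply: (cauchy_in_bound hn0 (r := fun m => n0 1 * (limn T - T m))).
  move=> m k mk; rewrite sub_series_geq // (le_trans (isnorm_sum hn0 _ _ _)) //.
  rewrite (le_trans (ler_sum _ (fun i _ => exp_term_le z x i))) // -mulr_sumr.
  rewrite ler_wpM2l ?(isnorm_ge0 hn0) // -sub_series_geq // lerB //.
  exact: nondecreasing_cvgn_le.
rewrite -(mulr0 (n0 1)) -(subrr (limn T)); apply: cvgM (cvg_cst _) _.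
exact: cvgB (cvg_cst _) T_cvg.
Qed.

Lemma expA_cvg_in x t : cvg_in n0 (series (exp_term ('i * t%:C) x)) (expA n0 x t).
Proof.
pose P U := cvg_in n0 (fun k => \sum_(m < k) (('i * t%:C) ^+ m / m`!%:R) *: x ^+ m) U.
rewrite seriesEord; apply: (epsilon_spec (inhabits 0) P); apply: n0_complete.
by have := exp_series_cauchy ('i * t%:C) x; rewrite seriesEord.
Qed.

End ExponentialSeries.

Section ImaginaryExponential.
Variable R : realType.

Lemma iexp_coeff (s : R) m :
  ('i * s%:C) ^+ m / m`!%:R = (cos_coeff s m)%:C + 'i * (sin_coeff s m)%:C.
Proof.
have := odd_double_half m; case: (odd m) => /= <-; move: (m./2) => p.
- rewrite add1n cos_coeff_odd add0r /sin_coeff /= odd_double /= doubleK mul1r.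
  rewrite exprMn exprS -mul2n exprM sqr_i !rmorphM /= rmorphXn rmorphN1.
  by rewrite fmorphV rmorph_nat rmorphXn mul2n -!mulrA.
- rewrite add0n sin_coeff_even mulr0 addr0 /cos_coeff /= odd_double /= doubleK.
  rewrite mul1r exprMn -mul2n exprM sqr_i !rmorphM /= rmorphXn rmorphN1.
  by rewrite fmorphV rmorph_nat rmorphXn.
Qed.

Lemma iexp_series_cvg (s : R) :
  cvg_inC (series (fun m => ('i * s%:C) ^+ m / m`!%:R))
    (expC ('i * s%:C)).
Proof.
have cos_cvg : series (cos_coeff s) @ \oo --> cos s.
  have := @is_cvg_series_cos_coeff R s.
  by have -> : cos s = lim (series (cos_coeff s) @ \oo) by rewrite unlock.
have sin_cvg : series (sin_coeff s) @ \oo --> sin s.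
  have := @is_cvg_series_sin_coeff R s.
  by have -> : sin s = lim (series (sin_coeff s) @ \oo) by rewrite unlock.
have seriesE k : series (fun m => ('i * s%:C) ^+ m / m`!%:R) k =
    (series (cos_coeff s) k)%:C + 'i * (series (sin_coeff s) k)%:C.
  rewrite /series /=; under eq_bigr do rewrite iexp_coeff.
  by rewrite big_split /= !raddf_sum mulr_sumr.
have -> : expC ('i * s%:C) = (cos s)%:C + 'i * (sin s)%:C.
  by rewrite /expC /= !mul0r !mul1r subr0 add0r expR0 mul1r.
apply: (cvg_in_bound (r := fun k =>
  `|series (cos_coeff s) k - cos s| + `|series (sin_coeff s) k - sin s|)).
  move=> k; rewrite seriesE opprD addrACA -mulrBr -!rmorphB.
  by rewrite (le_trans (isnormD cabs_norm _ _)) // cabsM cabs_i mul1r !cabs_real.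
by rewrite -[0]addr0; apply: cvgD; apply/norm_cvg0P/subr_cvg0.
Qed.

End ImaginaryExponential.

Section Eigenstates.
Variables (R : realType) (A0 : algType R[i]) (w : A0 -> R[i]).
Hypothesis hw : linear_fun (w : A0 -> R[i]^o).

Lemma eigenstate_exprn Y beta m :
  eigenstate w Y beta -> eigenstate w (Y ^+ m) (beta ^+ m).
Proof.
move=> eig a; elim: m => [|m IH]; first by rewrite !expr0 mulr1 mul1r.
by rewrite exprSr mulrA eig IH mulrA -exprS.
Qed.

Lemma eigenstate_exp_series z Y beta k : eigenstate w Y beta ->
  eigenstate w (series (exp_term z Y) k) (series (fun m => (z * beta) ^+ m / m`!%:R) k).
Proof.
move=> eig a; rewrite /series /= mulr_sumr (linear_fun_sum hw) mulr_suml.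
apply: eq_bigr => m _; rewrite /exp_term -scalerAr (linear_funZ hw).
rewrite (eigenstate_exprn m eig) exprMn.
change ((z ^+ m / m`!%:R) * (beta ^+ m * w a) = z ^+ m * beta ^+ m / m`!%:R * w a).
by ring.
Qed.

Variables (n0 n : A0 -> R) (gamma : R).
Hypotheses (hn0 : is_norm n0) (n_mul : forall a b, n (a * b) <= n a * n0 b).
Hypotheses (gamma_ge0 : 0 <= gamma) (w_bounded : forall a, cabs (w a) <= gamma * n a).

Lemma eigenstate_lim S U b beta : (forall k, eigenstate w (S k) (b k)) ->
  cvg_in n0 S U -> cvg_inC b beta -> eigenstate w U beta.
Proof.
move=> eigS SU bbeta a.
have waSU : cvg_inC (fun k => w (a * S k)) (w (a * U)).
  apply: (cvg_in_bound (r := fun k => gamma * n a * n0 (S k - U))).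
    move=> k; rewrite -(linear_funB hw) -mulrBr -mulrA (le_trans (w_bounded _)) //.
    by apply: ler_wpM2l => //; apply: n_mul.
  by rewrite -(mulr0 (gamma * n a)); apply: cvgM (cvg_cst _) (cvg_in_dist0 hn0 SU).
apply: (cvg_in_unique (V := R[i]^o) cabs_norm waSU); rewrite mulrC.
rewrite (_ : (fun k => w (a * S k)) = fun k => w a *: b k).
  exact (cvg_inZ cabs_norm (w a) bbeta).
by apply: funext => k; rewrite eigS mulrC.
Qed.

End Eigenstates.

Section CQstarEigenstates.
Variables (R : realType) (A0 : algType R[i]) (star : A0 -> A0) (n0 n : A0 -> R).
Variables (X : lmodType R[i]) (nX : X -> R) (j : A0 -> X) (w : A0 -> R[i]) (gamma : R).
Hypotheses (starD : forall a b, star (a + b) = star a + star b).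
Hypotheses (starM : forall a b, star (a * b) = star b * star a).
Hypotheses (starK : forall a, star (star a) = a).
Hypotheses (hn0 : is_norm n0) (n0M : forall a b, n0 (a * b) <= n0 a * n0 b).
Hypothesis n0_complete : complete_in n0.
Hypotheses (n_star : forall a, n (star a) = n a).
Hypotheses (n_mul : forall a b, n (a * b) <= n a * n0 b).
Hypotheses (hnX : is_norm nX) (hj : linear_fun j).
Hypothesis j_isometry : forall a, nX (j a) = n a.
Hypothesis j_dense : forall x, exists u : nat -> A0, cvg_in nX (j \o u) x.
Hypotheses (hw : linear_fun (w : A0 -> R[i]^o)).
Hypotheses (w_pos : forall a, 0 <= w (star a * a)) (w1 : w 1 = 1).
Hypotheses (gamma_gt0 : 0 < gamma) (w_bounded : forall a, cabs (w a) <= gamma * n a).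

Lemma n_mul_star a b : n (a * b) <= n0 (star a) * n b.
Proof. by rewrite -n_star starM mulrC (le_trans (n_mul _ _)) ?n_star. Qed.

Lemma omega_bar_j a : omega_bar nX j w (j a) = w a.
Proof.
have [_ _ ext_j] := epsilon_spec (inhabits (fun=> 0)) _
  (bounded_extension hnX hj j_isometry j_dense hw gamma_gt0 w_bounded).
exact: ext_j.
Qed.

Lemma eigenstate_barE Y beta :
  eigenstate_bar nX j w (j Y) beta <-> eigenstate w Y beta.
Proof.
have leftmulE a : leftmul nX j a (j Y) = j (a * Y).
  exact: leftmul_j hnX hj j_isometry _ _ _ (n_mul_star a).
by split=> eig a; have := eig a; rewrite /= leftmulE !omega_bar_j.
Qed.

Lemma star1 : star 1 = 1.
Proof. by rewrite -[star 1]mulr1 -{2}[1]starK -starM mulr1 starK. Qed.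

Lemma state_selfadjoint_real H : star H = H -> complex.Im (w H) = 0.
Proof.
(* [w ((1 + H)^* (1 + H)) = 1 + 2 w H + w (H^* H)] and [w (H^* H)] are real. *)
move=> hH; have := ger0_Im (w_pos (1 + H)); have := ger0_Im (w_pos H).
rewrite starD star1 hH mulrDl mul1r mulrDr mulr1 !(linear_funD hw) w1.
case: (w H) (w (H * H)) => a b [c d] /= -> /eqP.
by rewrite !add0r addr0 -mulr2n mulrn_eq0 => /eqP.
Qed.

Lemma eigenvalue_real H alpha : star H = H -> eigenstate w H alpha ->
  alpha = (complex.Re alpha)%:C.
Proof.
move=> hH /(_ 1); rewrite !mul1r w1 mulr1 => <-.
by have := state_selfadjoint_real hH; case: (w H) => a b /= ->.
Qed.

Lemma eigenstate_expA H alpha t : star H = H -> eigenstate w H alpha ->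
  eigenstate w (expA n0 H t) (expC ('i * t%:C * alpha)).
Proof.
move=> hH eig; have alpha_real := eigenvalue_real hH eig.
apply: (eigenstate_lim hw hn0 n_mul (ltW gamma_gt0) w_bounded
  (fun k => eigenstate_exp_series hw ('i * t%:C) k eig)).
  exact: expA_cvg_in hn0 n0M n0_complete H t.
by rewrite alpha_real -mulrA -rmorphM; apply: iexp_series_cvg.
Qed.

End CQstarEigenstates.

Theorem lemma5p3 (R : realType) (A0 : algType R[i]) (star : A0 -> A0)
  (n0 n : A0 -> R) (X : lmodType R[i]) (nX : X -> R) (j : A0 -> X)
  (hCQ : is_CQstar_algebra star n0 n nX j)
  (H : A0) (hH : star H = H) (w : A0 -> R[i]) (hw : in_E star n w)
  (alpha : R[i]) :
  let st_i := eigenstate_bar nX j w (j H) alpha in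
  let st_ii := eigenstate w H alpha in
  let st_iii := forall t : R,
      eigenstate_bar nX j w (j (expA n0 H t)) (expC ('i * t%:C * alpha)) in
  let st_iv := forall t : R,
      eigenstate w (expA n0 H t) (expC ('i * t%:C * alpha)) in
  [/\ st_i <-> st_ii, st_iii <-> st_iv & st_ii -> st_iv].
Proof.
case: hCQ => [[[[starD _ starM starK] [hn0 n0M _ n0_complete]] _ _ n_mul n_star]
  [hnX _ hj j_isometry j_dense]].
case: hw => w_lin w_pos w1 [gamma [gamma_gt0 w_bounded]].
have barE := eigenstate_barE starM n_star n_mul hnX hj j_isometry j_dense
  w_lin gamma_gt0 w_bounded.
split.
- exact: barE.
- by split=> eig t; apply/barE.
- move=> eig t; exact: eigenstate_expA starD starM starK hn0 n0M n0_complete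
    n_mul w_lin w_pos w1 gamma_gt0 w_bounded H alpha t hH eig.
Qed.
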